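(* Let $\mathcal T$ be a locally finite partial tessellation of ${\mathbb X}$, let $H$ be a hyperplane of ${\mathbb X}$ and let $Z$ be a closed half-space bounded by $H$. Then $$\mathcal T_Z=\{T\cap H: T\in\mathcal T \text{ and } Z \text{ is an essential closed half-space of } T\}$$ is a locally finite partial tessellation of $H$.
   Context: ${\mathbb X}$ is $\mathbb R^n$, the unit sphere $\mathbb S^n$, or hyperbolic $n$-space; a hyperplane is a complete totally geodesic submanifold of codimension 1, itself a space of the same type of dimension $n-1$. Closed half-spaces are closures of the two components of the complement of a hyperplane. A polyhedron (of ${\mathbb X}$ or of $H$) is a nonempty intersection of a family of closed half-spaces whose boundary hyperplanes form a locally finite family; it is thick if it has nonempty interior in the ambient space. For a thick polyhedron $T$, a closed half-space $Z$ is essential if $T\subseteq Z$ and $T\cap\partial Z$ has nonempty interior in $\partial Z$. A partial tessellation is a set of thick polyhedra (tiles) with pairwise disjoint interiors; locally finite means every compact set meets only finitely many tiles. *)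

From HB Require Import structures.
From mathcomp Require Import all_boot all_order all_algebra.
From mathcomp Require Import all_classical all_reals all_analysis.
Set Implicit Arguments. Unset Strict Implicit. Unset Printing Implicit Defensive.
Import Order.TTheory GRing.Theory Num.Theory.
Import numFieldNormedType.Exports.
Local Open Scope classical_set_scope.
Local Open Scope ring_scope.

(* The three model geometries, realised inside V = 'rV[R]_(n.+1):
   - Euclid     : the affine chart { x | x_0 = 1 }  (= R^n)
   - Sphere     : the unit sphere { x | sum x_i^2 = 1 }  (= S^n)
   - Hyperbolic : the upper sheet of the hyperboloid
                  { x | x_0 > 0, -x_0^2 + sum_{i>0} x_i^2 = -1 }  (= H^n).
   All topological notions are those of the subspace topology from V. *)
Inductive geom := Euclid | Sphere | Hyperbolic.

Section Defs.
Variables (R : realType) (n : nat).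
Local Notation V := 'rV[R]_n.+1.

Definition lf (b x : V) : R := \sum_(i < n.+1) b 0 i * x 0 i.

Definition model_space (g : geom) : set V :=
  match g with
  | Euclid => [set x | x 0 ord0 = 1]
  | Sphere => [set x | \sum_(i < n.+1) x 0 i ^+ 2 = 1]
  | Hyperbolic => [set x | 0 < x 0 ord0 /\
        - (x 0 ord0 ^+ 2) + \sum_(i < n.+1 | i != ord0) x 0 i ^+ 2 = -1]
  end.

(* M is a model space (X itself or a hyperplane of X, i.e. X cut by a linear
   subspace).  Its hyperplanes are its intersections with linear hyperplanes
   ker b which do not contain M; H is the boundary of the closed half-space Z
   (of M) when both are cut out by the same functional b. *)
Definition bounded_halfspace (M H Z : set V) : Prop :=
  exists b : V, H = M `&` [set x | lf b x = 0] /\ H <> M /\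
                Z = M `&` [set x | 0 <= lf b x].

Definition hyperplane_in (M H : set V) : Prop :=
  exists Z, bounded_halfspace M H Z.

Definition halfspace_in (M Z : set V) : Prop :=
  exists H, bounded_halfspace M H Z.

Definition relint (M S : set V) : set V :=
  [set x | M x /\ S x /\ exists U : set V, nbhs x U /\ U `&` M `<=` S].

Definition locally_finite_in (M : set V) (F : set (set V)) : Prop :=
  forall x, M x -> exists U : set V, nbhs x U /\
    finite_set [set A | F A /\ A `&` U !=set0].

Definition polyhedron_in (M P : set V) : Prop :=
  exists F : set (set V * set V),
    (forall HZ, F HZ -> bounded_halfspace M HZ.1 HZ.2) /\
    locally_finite_in M [set H | exists Z, F (H, Z)] /\
    P = M `&` \bigcap_(HZ in F) HZ.2 /\
    P !=set0.

Definition thick_in (M P : set V) : Prop := relint M P !=set0.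

Definition essential (M T Z : set V) : Prop :=
  T `<=` Z /\ exists H, bounded_halfspace M H Z /\ relint H (T `&` H) !=set0.

Definition partial_tessellation_in (M : set V) (Tt : set (set V)) : Prop :=
  (forall T, Tt T -> polyhedron_in M T /\ thick_in M T) /\
  (forall T T', Tt T -> Tt T' -> T <> T' ->
     relint M T `&` relint M T' = set0).

Definition locally_finite_tess_in (M : set V) (Tt : set (set V)) : Prop :=
  partial_tessellation_in M Tt /\
  forall K, K `<=` M -> compact K -> finite_set [set T | Tt T /\ T `&` K !=set0].

End Defs.

From HB Require Import structures.
From mathcomp Require Import all_boot all_order all_algebra.
From mathcomp Require Import all_classical all_reals all_analysis.
From mathcomp Require Import lra.
Set Implicit Arguments. Unset Strict Implicit. Unset Printing Implicit Defensive.
Import Order.TTheory GRing.Theory Num.Theory.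
Import numFieldNormedType.Exports.
Local Open Scope classical_set_scope.
Local Open Scope ring_scope.

(* Each model space M is locally conic: near a point of M, the positive
   multiples of a neighbourhood of it in M fill a neighbourhood in the ambient
   vector space.  A polyhedron of M is M ∩ C for a convex cone C cut out by the
   functionals of its half-spaces.  If x is a relative interior point of T ∩ H
   and of T' ∩ H, where the thick tiles T, T' lie on the side [lf b >= 0] of H,
   then near x both cones contain the whole open side [lf b > 0]: such a point
   is a point of [ker b] close to x plus a positive multiple of an interior
   point of the tile.  Rescaling a point x + s b back onto M gives a common
   interior point of T and T', so distinct tiles have disjoint relative
   interiors in H.  Polyhedrality and local finiteness restrict from M to H. *)

Section Tessellation.
Variables (R : realType) (n : nat).
Local Notation V := 'rV[R]_n.+1.

Lemma lfD (b x y : V) : lf b (x + y) = lf b x + lf b y.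
Proof. by rewrite /lf -big_split /=; apply: eq_bigr => i _; rewrite mxE mulrDr. Qed.

Lemma lfZ (b x : V) (t : R) : lf b (t *: x) = t * lf b x.
Proof. by rewrite /lf mulr_sumr; apply: eq_bigr => i _; rewrite mxE mulrCA. Qed.

Lemma lfB (b x y : V) : lf b (x - y) = lf b x - lf b y.
Proof. by rewrite lfD -scaleN1r lfZ mulN1r. Qed.

Lemma lf0 (x : V) : lf 0 x = 0.
Proof. by rewrite /lf big1 // => i _; rewrite mxE mul0r. Qed.

Lemma continuous_lf (b : V) : continuous (lf b).
Proof.
move=> x; apply: cvg_big; [exact: add_continuous | exact: nbhs_filter|].
move=> i _; apply: cvgMr; last exact: coord_continuous.
exact: nbhs_filter.
Qed.

Lemma lf_self_ge0 (b : V) : 0 <= lf b b.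
Proof. by apply: sumr_ge0 => i _; rewrite -expr2 sqr_ge0. Qed.

Lemma lf_self_eq0 (b : V) : lf b b = 0 -> b = 0.
Proof.
move=> /psumr_eq0P b0; apply/rowP => i; rewrite mxE; apply/eqP.
by rewrite -sqrf_eq0 expr2 b0 // => j _; rewrite -expr2 sqr_ge0.
Qed.

Lemma nbhs_lf_gt0 (b y : V) : 0 < lf b y -> nbhs y [set p | 0 < lf b p].
Proof.
move=> by0; have : nbhs (lf b y) [set r : R | 0 < r].
  by apply: open_nbhs_nbhs; split; [exact: open_gt|].
exact: continuous_lf.
Qed.

Lemma nbhs0_exists_gt0 (A : set R) : nbhs (0 : R) A -> exists2 e, 0 < e & A e.
Proof.
move=> /nbhs_ballP [r r0 hr]; exists (r / 2); first by rewrite divr_gt0.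
apply: hr; rewrite /ball /= sub0r normrN gtr0_norm ?divr_gt0 //.
by rewrite ltr_pdivrMr // ltr_pMr // ltr1n.
Qed.

(* Moving from y in the direction -b keeps [lf b >= 0] only if [lf b b <= 0]. *)
Lemma lf_ge0_interior_root (b y : V) :
  nbhs y [set p | 0 <= lf b p] -> lf b y = 0 -> b = 0.
Proof.
move=> yint by0.
have to_y : (fun e : R => y - e *: b) @ nbhs (0 : R) --> y.
  rewrite -[X in _ --> X]subr0 -[X in _ - X](scale0r b).
  by apply: cvgB; [exact: cvg_cst | apply: cvgZl; exact: cvg_id].
have [e e0] := nbhs0_exists_gt0 (to_y _ yint).
rewrite /= lfB lfZ by0 sub0r oppr_ge0 pmulr_rle0 // => bb_le0.
by apply: lf_self_eq0; apply/eqP; rewrite eq_le bb_le0 lf_self_ge0.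
Qed.

Definition locally_conic (M : set V) : Prop :=
  forall m U, M m -> nbhs m U ->
  nbhs m [set p | exists t y, [/\ 0 < t, M y, U y & p = t *: y]].

Lemma conic_nbhs (M Q U : set V) m : locally_conic M -> M m -> nbhs m U ->
  M `&` U `<=` Q -> (forall t p, 0 < t -> Q p -> Q (t *: p)) -> nbhs m Q.
Proof.
move=> conicM Mm Um MUQ Qscale; apply: filterS (conicM m U Mm Um).
by move=> _ [t [y [t0 My Uy ->]]]; apply: Qscale => //; exact: MUQ.
Qed.

Lemma radial_locally_conic (M : set V) (phi : V -> R) : continuous phi ->
  (forall m, M m -> phi m = 1) ->
  (forall m, M m -> \forall p \near m, 0 < phi p -> M ((phi p)^-1 *: p)) ->
  locally_conic M.
Proof.
move=> phi_cont phi1 phiM m U Mm Um.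
have to_m : (fun p => (phi p)^-1 *: p) @ nbhs m --> m.
  rewrite -[X in _ --> X]scale1r -[X in X *: _]invr1 -(phi1 m Mm).
  apply: cvgZ; last exact: cvg_id.
  by apply: cvgV; [rewrite phi1 ?oner_neq0 | exact: phi_cont].
have phi_gt0 : \forall p \near m, 0 < phi p.
  have : nbhs (phi m) [set r : R | 0 < r].
    by apply: open_nbhs_nbhs; split; [exact: open_gt | rewrite /= phi1].
  exact: phi_cont.
near=> p; exists (phi p), ((phi p)^-1 *: p); split.
- by near: p.
- by apply: (near (phiM m Mm) p) => //; near: p.
- by near: p; exact: to_m.
- by rewrite scalerA mulfV ?scale1r // gt_eqF //; near: p.
Unshelve. all: by end_near.
Qed.

Lemma continuous_sum_sqr (P : pred 'I_n.+1) :
  continuous (fun p : V => \sum_(i < n.+1 | P i) p 0 i ^+ 2).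
Proof.
move=> x; apply: cvg_big; [exact: add_continuous | exact: nbhs_filter|].
by move=> i _; apply: cvgM; try exact: nbhs_filter; exact: coord_continuous.
Qed.

Lemma euclid_locally_conic : locally_conic (@model_space R n Euclid).
Proof.
apply: (@radial_locally_conic _ (fun p : V => p 0 ord0)) => // [|m _].
  exact: coord_continuous.
by apply: filterE => p p0; rewrite /= mxE mulVf ?gt_eqF.
Qed.

Lemma sphere_locally_conic : locally_conic (@model_space R n Sphere).
Proof.
apply: (@radial_locally_conic _ (fun p : V => Num.sqrt (\sum_i p 0 i ^+ 2))).
- move=> p; apply: continuous_comp; first exact: continuous_sum_sqr.
  exact: sqrt_continuous.
- by move=> m /= ->; rewrite sqrtr1.
move=> m _; apply: filterE => p; rewrite sqrtr_gt0 => s_gt0 /=.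
under eq_bigr do rewrite mxE exprMn.
by rewrite -mulr_sumr exprVn sqr_sqrtr ?ltW // mulVf ?gt_eqF.
Qed.

Lemma hyperbolic_locally_conic : locally_conic (@model_space R n Hyperbolic).
Proof.
pose q (p : V) := p 0 ord0 ^+ 2 - \sum_(i < n.+1 | i != ord0) p 0 i ^+ 2.
apply: (@radial_locally_conic _ (fun p => Num.sqrt (q p))).
- move=> p; apply: continuous_comp; last exact: sqrt_continuous.
  apply: cvgB; [exact: nbhs_filter | | exact: continuous_sum_sqr].
  rewrite expr2; under eq_cvg do rewrite expr2.
  by apply: cvgM; try exact: nbhs_filter; exact: coord_continuous.
- by move=> m [_ mE]; rewrite /q (_ : _ - _ = 1) ?sqrtr1 //; lra.
move=> m [m0 _].
have : \forall p \near m, 0 < (p : V) 0 ord0.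
  have : nbhs (m 0 ord0) [set r : R | 0 < r].
    by apply: open_nbhs_nbhs; split; [exact: open_gt|].
  exact: coord_continuous.
apply: filterS => p p0; rewrite sqrtr_gt0 => q_gt0; split.
  by rewrite mxE mulr_gt0 // invr_gt0 sqrtr_gt0.
under eq_bigr do rewrite mxE exprMn.
rewrite mxE exprMn -mulr_sumr exprVn sqr_sqrtr ?ltW // -mulrN -mulrDr.
by rewrite (_ : _ + _ = - q p) ?mulrN ?mulVf ?gt_eqF //; rewrite /q; lra.
Qed.

Lemma model_space_locally_conic g : locally_conic (@model_space R n g).
Proof.
by case: g; [exact: euclid_locally_conic | exact: sphere_locally_conic
  | exact: hyperbolic_locally_conic].
Qed.


Lemma hyperplane_lf_neq0 (M H : set V) b :
  H = M `&` [set p | lf b p = 0] -> H <> M -> b <> 0.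
Proof.
move=> HE HM b0; apply: HM; rewrite HE b0.
by apply/seteqP; split=> [x []|x Mx] //; split; rewrite /= ?lf0.
Qed.

(* A point of H lies in Z; if it were off H', it would be interior to Z
   (M being locally conic), and the functional of H vanishes there. *)
Lemma halfspace_boundary_unique (M H H' Z : set V) : locally_conic M ->
  bounded_halfspace M H Z -> bounded_halfspace M H' Z -> H = H'.
Proof.
move=> conicM; suff sub K K' : bounded_halfspace M K Z ->
    bounded_halfspace M K' Z -> K `<=` K'.
  by move=> HZ H'Z; apply/seteqP; split; [exact: sub | exact: sub].
move=> [b [KE [KM ZE]]] [b' [K'E [_ Z'E]]] y.
rewrite KE K'E => -[My by0]; split => //.
have : Z y by rewrite ZE; split => //=; rewrite by0.
rewrite Z'E => -[_ /= b'y].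
case: (ltgtP (lf b' y) 0) => // [|b'y_gt0]; first by rewrite ltNge b'y.
exfalso; apply: (hyperplane_lf_neq0 KE KM); apply: (lf_ge0_interior_root _ by0).
apply: (conic_nbhs conicM My (nbhs_lf_gt0 b'y_gt0)) => [p [Mp b'p]|t p t0 /= bp].
  have : Z p by rewrite Z'E; split => //=; exact: ltW.
  by rewrite ZE => -[].
by rewrite lfZ mulr_ge0 // ltW.
Qed.

Definition convex_cone (C : set V) : Prop :=
  (forall p q, C p -> C q -> C (p + q)) /\
  (forall t p, 0 <= t -> C p -> C (t *: p)).

Lemma convex_coneI (C C' : set V) :
  convex_cone C -> convex_cone C' -> convex_cone (C `&` C').
Proof.
move=> [CD CZ] [C'D C'Z].
by split=> [p q [Cp C'p] [Cq C'q]|t p t0 [Cp C'p]]; split; auto.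
Qed.

Lemma polyhedron_convex_cone (M T : set V) :
  polyhedron_in M T -> exists2 C, convex_cone C & T = M `&` C.
Proof.
move=> [F [Fhalf [_ [TE _]]]].
exists [set p | forall HZ c, F HZ -> HZ.2 = M `&` [set x | 0 <= lf c x] ->
  0 <= lf c p].
  split=> [p q Cp Cq|t p t0 Cp] HZ c FHZ HZE; rewrite ?lfD ?lfZ.
    by rewrite addr_ge0 // ?(Cp _ _ FHZ HZE) ?(Cq _ _ FHZ HZE).
  by rewrite mulr_ge0 // (Cp _ _ FHZ HZE).
rewrite TE; apply/seteqP; split=> y [My yT]; split=> // HZ.
  by move=> c FHZ HZE; have := yT HZ FHZ; rewrite HZE => -[].
move=> FHZ; have [c [_ [_ HZE]]] := Fhalf HZ FHZ.
by rewrite HZE; split => //; exact: yT _ _ FHZ HZE.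
Qed.

Lemma relintS (M S S' : set V) : S `<=` S' -> relint M S `<=` relint M S'.
Proof.
move=> SS' x [Mx [Sx [U [Ux US]]]]; split => //; split; first exact: SS'.
by exists U; split => // y /US /SS'.
Qed.

Lemma relint_halfspace_lf_gt0 (M T : set V) b z : locally_conic M -> b <> 0 ->
  T `<=` [set p | 0 <= lf b p] -> relint M T z -> 0 < lf b z.
Proof.
move=> conicM b0 Tb [Mz [Tz [U [Uz UT]]]].
rewrite lt0r Tb // andbT; apply/eqP => bz0; apply: b0.
apply: (lf_ge0_interior_root _ bz0).
apply: (conic_nbhs conicM Mz Uz) => [p [Mp Up]|t p t0 /= bp].
  by apply: Tb; apply: UT.
by rewrite lfZ mulr_ge0 // ltW.
Qed.

Lemma relint_hyperplane_nbhs (M H T C : set V) b x : locally_conic M ->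
  convex_cone C -> H = M `&` [set p | lf b p = 0] -> T = M `&` C ->
  relint H (T `&` H) x -> nbhs x [set p | lf b p = 0 -> C p].
Proof.
move=> conicM [_ CZ] HE TE [Hx [_ [U [Ux UT]]]].
have Mx : M x by move: Hx; rewrite HE => -[].
apply: (conic_nbhs conicM Mx Ux) => [y [My Uy] by0|t p t0 /= Cp].
  have : (T `&` H) y by apply: UT; split => //; rewrite HE.
  by rewrite TE => -[[]].
rewrite lfZ => /eqP; rewrite mulf_eq0 gt_eqF //= => /eqP /Cp.
exact: CZ (ltW t0).
Qed.

(* Split p along z as a point of the hyperplane [lf b = 0] plus a nonnegative
   multiple of z; the first part stays close to x. *)
Lemma cone_nbhs_off_hyperplane (C : set V) b x z : convex_cone C -> C z ->
  0 < lf b z -> lf b x = 0 -> nbhs x [set p | lf b p = 0 -> C p] ->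
  \forall p \near x, 0 < lf b p -> C p.
Proof.
move=> [CD CZ] Cz bz bx Cx.
pose pr p := p - (lf b p / lf b z) *: z.
have lf_pr p : lf b (pr p) = 0 by rewrite lfB lfZ mulfVK ?gt_eqF // subrr.
have pr_cont : pr @ nbhs x --> x.
  rewrite -[X in _ --> X]subr0 -(scale0r z) -(mul0r (lf b z)^-1) -bx.
  apply: cvgB; first exact: cvg_id.
  apply: cvgZ; last exact: cvg_cst.
  by apply: cvgM; [exact: continuous_lf | exact: cvg_cst].
have : nbhs x [set p | lf b (pr p) = 0 -> C (pr p)] := pr_cont _ Cx.
apply: filterS => p /(_ (lf_pr p)) Cpr bp.
rewrite -[p](subrK ((lf b p / lf b z) *: z)); apply: CD Cpr _.
by apply: CZ Cz; rewrite divr_ge0 // ltW.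
Qed.

Lemma relint_of_cone_nbhs (M T C : set V) t y : convex_cone C ->
  T = M `&` C -> 0 < t -> M y -> nbhs (t *: y) C -> relint M T y.
Proof.
move=> [_ CZ] TE t0 My Cty.
have to_ty : (fun y' => t *: y') @ nbhs y --> t *: y.
  by apply: cvgZ; [exact: cvg_cst | exact: cvg_id].
have Cy_near : nbhs y [set y' | C (t *: y')] := to_ty _ Cty.
have unscale y' : C (t *: y') -> C y'.
  move=> Cty'; rewrite -[y']scale1r -(mulVf (lt0r_neq0 t0)) -scalerA.
  by apply: CZ Cty'; rewrite invr_ge0 ltW.
rewrite TE; split => //; split.
  by split => //; apply/unscale/(nbhs_singleton Cy_near).
by exists [set y' | C (t *: y')]; split => // y' [/unscale Cy' My'].
Qed.

Lemma relint_off_hyperplane (M T C : set V) b x : locally_conic M ->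
  convex_cone C -> T = M `&` C -> M x -> lf b x = 0 -> b <> 0 ->
  (\forall p \near x, 0 < lf b p -> C p) -> relint M T !=set0.
Proof.
move=> conicM coneC TE Mx bx b0 Cx.
pose W := [set p | 0 < lf b p -> C p] `&`
  [set p | exists t y, [/\ 0 < t, M y, setT y & p = t *: y]].
have Wx : nbhs x W°.
  by apply/nbhs_interior/(filterI Cx); exact: conicM Mx filterT.
have to_x : (fun s : R => x + s *: b) @ nbhs (0 : R) --> x.
  rewrite -[X in _ --> X]addr0 -[X in _ + X](scale0r b).
  by apply: cvgD; [exact: cvg_cst | apply: cvgZl; exact: cvg_id].
have [s s0 Wp] := nbhs0_exists_gt0 (to_x _ Wx).
have {Wp} : nbhs (x + s *: b) W := Wp.
set p := x + s *: b => Wp.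
have bp : 0 < lf b p.
  rewrite /p lfD bx add0r lfZ mulr_gt0 // lt0r lf_self_ge0 andbT.
  by apply/eqP => /lf_self_eq0.
have [_ [t [y [t0 My _ pE]]]] := nbhs_singleton Wp.
exists y; apply: (relint_of_cone_nbhs coneC TE t0 My); rewrite -pE.
by apply: filterS (filterI Wp (nbhs_lf_gt0 bp)) => q [[Cq _] bq]; exact: Cq.
Qed.


Lemma tile_cone_near_hyperplane (M H T : set V) b x : locally_conic M ->
  H = M `&` [set p | lf b p = 0] -> b <> 0 ->
  polyhedron_in M T -> thick_in M T -> T `<=` [set p | 0 <= lf b p] ->
  relint H (T `&` H) x ->
  exists2 C, convex_cone C & T = M `&` C /\ \forall p \near x, 0 < lf b p -> C p.
Proof.
move=> conicM HE b0 /polyhedron_convex_cone [C coneC TE] [z zT] Tb xTH.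
exists C => //; split => //.
have [Mx bx] : M x /\ lf b x = 0 by have := xTH.1; rewrite HE.
apply: (cone_nbhs_off_hyperplane coneC _
  (relint_halfspace_lf_gt0 conicM b0 Tb zT) bx).
  by have := zT.2.1; rewrite TE => -[].
exact: relint_hyperplane_nbhs conicM coneC HE TE xTH.
Qed.

Lemma hyperplane_relint_meet (M H T T' : set V) b x : locally_conic M ->
  H = M `&` [set p | lf b p = 0] -> b <> 0 ->
  polyhedron_in M T -> thick_in M T -> T `<=` [set p | 0 <= lf b p] ->
  polyhedron_in M T' -> thick_in M T' -> T' `<=` [set p | 0 <= lf b p] ->
  relint H (T `&` H) x -> relint H (T' `&` H) x ->
  relint M T `&` relint M T' !=set0.
Proof.
move=> conicM HE b0 pT thT Tb pT' thT' T'b xT xT'.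
have [C coneC [TE CT]] := tile_cone_near_hyperplane conicM HE b0 pT thT Tb xT.
have [C' coneC' [T'E C'T']] :=
  tile_cone_near_hyperplane conicM HE b0 pT' thT' T'b xT'.
have [Mx bx] : M x /\ lf b x = 0 by have := xT.1; rewrite HE.
have TT'E : T `&` T' = M `&` (C `&` C') by rewrite TE T'E setIACA setIid.
have CC'x : \forall p \near x, 0 < lf b p -> (C `&` C') p.
  by apply: filterS2 CT C'T' => p Cp C'p bp; split; [exact: Cp | exact: C'p].
have [y yTT'] :=
  relint_off_hyperplane conicM (convex_coneI coneC coneC') TT'E Mx bx b0 CC'x.
by exists y; split; apply: relintS yTT' => ? [].
Qed.

Lemma polyhedron_in_restrict (M H T : set V) : H `<=` M -> polyhedron_in M T ->
  T `&` H !=set0 -> polyhedron_in H (T `&` H).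
Proof.
move=> HM [F [Fhalf [Flf [TE _]]]] THne.
exists [set AZ' | exists2 AZ, F AZ &
  [/\ AZ'.1 = H `&` AZ.1, AZ'.2 = H `&` AZ.2 & AZ'.1 <> H]].
split; [|split; [|split]] => //.
- move=> [A' Z'] [[A Z0] FAZ [/= A'E Z'E A'H]].
  have [c [AE [_ Z0E]]] := Fhalf _ FAZ; rewrite /= in AE Z0E.
  exists c; rewrite A'E Z'E AE Z0E !setIA (setIidl HM); split => //; split => //.
  by move=> HcH; apply: A'H; rewrite A'E AE setIA (setIidl HM).
- move=> x Hx; have [U [Ux Ufin]] := Flf x (HM x Hx).
  exists U; split => //.
  apply: sub_finite_set (finite_image (fun A => H `&` A) Ufin).
  move=> A' [[Z' [[A Z0] FAZ [/= A'E _ _]]] [y [A'y Uy]]].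
  exists A; last by rewrite A'E.
  split; first by exists Z0.
  by exists y; split => //; move: A'y; rewrite A'E => -[].
rewrite TE; apply/seteqP; split => y.
  move=> [[My yF] Hy]; split => // -[A' Z'] [[A Z0] FAZ [/= _ Z'E _]].
  by rewrite Z'E; split => //; exact: (yF _ FAZ).
move=> [Hy yF]; split => //; split; first exact: HM.
move=> [A Z0] FAZ /=.
have [c [AE [_ Z0E]]] := Fhalf _ FAZ; rewrite /= in AE Z0E.
have [HA|HA] := pselect (H `&` A = H).
  have : A y by rewrite -HA in Hy; case: Hy.
  by rewrite AE Z0E => -[My /= ->].
have [] // : (H `&` Z0) y by apply: (yF (H `&` A, H `&` Z0)); exists (A, Z0).
Qed.

End Tessellation.

Theorem lemma4p5 (R : realType) (g : geom) (n : nat)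
    (Tt : set (set 'rV[R]_n.+1)) (H Z : set 'rV[R]_n.+1) :
  locally_finite_tess_in (@model_space R n g) Tt ->
  bounded_halfspace (@model_space R n g) H Z ->
  locally_finite_tess_in H
    [set S | exists T, Tt T /\ essential (@model_space R n g) T Z /\ S = T `&` H].
Proof.
move=> [[tiles disj] fin] HZ.
have conicM := @model_space_locally_conic R n g.
have [b [HE [HM ZE]]] := HZ.
have b0 := hyperplane_lf_neq0 HE HM.
have HsubM : H `<=` @model_space R n g by rewrite HE => y [].
have Tb T : T `<=` Z -> T `<=` [set p | 0 <= lf b p].
  by move=> TZ p /TZ; rewrite ZE => -[].
split; [split|].
- move=> _ [T [Tt_T [[TZ [H' [H'Z THne]]] ->]]].
  rewrite -(halfspace_boundary_unique conicM HZ H'Z) in THne.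
  split => //; apply: polyhedron_in_restrict HsubM (tiles T Tt_T).1 _.
  by have [y [_ [yTH _]]] := THne; exists y.
- move=> _ _ [T [Tt_T [[TZ _] ->]]] [T' [Tt_T' [[T'Z _] ->]]] neq.
  apply/seteqP; split => // x [xT xT'].
  have neqT : T <> T' by move=> TT'; apply: neq; rewrite TT'.
  have [[pT thT] [pT' thT']] := (tiles T Tt_T, tiles T' Tt_T').
  have [y yTT'] := hyperplane_relint_meet conicM HE b0
    pT thT (Tb T TZ) pT' thT' (Tb T' T'Z) xT xT'.
  by rewrite (disj T T' Tt_T Tt_T' neqT) in yTT'.
- move=> K KH cK.
  have := fin K (subset_trans KH HsubM) cK.
  move=> /(finite_image (fun T => T `&` H)); apply: sub_finite_set.
  move=> _ [[T [Tt_T [_ ->]]] [y [[Ty Hy] Ky]]].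
  by exists T => //; split => //; exists y.
Qed.
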